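(* Let $F$ be a field and let $G$ be a bipartite graph with bipartition $(X,Y)$, where $|X|=m$, $|Y|=n$ and $m\le n$. If $\mathcal{R}_F(G)\neq\emptyset$, then $$f(G\Box K_2)=m.$$
   Context: All graphs are finite and simple. For a graph $H$ with a perfect matching $M$, a subset $S\subseteq M$ is a forcing set of $M$ if $S$ is contained in no other perfect matching of $H$; $f(H,M)$ is the minimum size of a forcing set of $M$, and $f(H)$ is the minimum of $f(H,M)$ over all perfect matchings $M$ of $H$. For a bipartite graph $G$ with bipartition $(X,Y)$, a weighted bi-adjacency matrix of $G$ over $F$ is an $|X|\times|Y|$ matrix over $F$, rows indexed by $X$ and columns by $Y$, whose $(x,y)$ entry is nonzero iff $x$ and $y$ are adjacent. $\mathcal{R}_F(G)$ denotes the set of weighted bi-adjacency matrices $B$ of $G$ over $F$ (rows indexed by $X$, columns by $Y$) for which there is another weighted bi-adjacency matrix $C$ of $G$ over $F$ (rows indexed by $X$, columns by $Y$) with $BC^{\top}=I_m$; so $\mathcal{R}_F(G)\neq\emptyset$ means such a pair $B,C$ exists. $K_2$ is the complete graph on two vertices, and $G\Box H$ is the Cartesian product: vertex set $V(G)\times V(H)$, with $(g_1,h_1)\sim(g_2,h_2)$ iff either $g_1=g_2$ and $h_1h_2\in E(H)$, or $h_1=h_2$ and $g_1g_2\in E(G)$. *)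

From HB Require Import structures.
From mathcomp Require Import all_boot all_order all_algebra.
Set Implicit Arguments. Unset Strict Implicit. Unset Printing Implicit Defensive.
Import GRing.Theory.

(* Graphs are given by an adjacency relation [e : rel V] on a finite type V
   (for all graphs below it is symmetric and irreflexive: simple graphs). *)
Section Matchings.
Variable V : finType.
Variable e : rel V.

Definition is_edge (s : {set V}) : bool :=
  [exists u, exists v, [&& u != v, e u v & s == [set u; v]]].

Definition perfect_matching (M : {set {set V}}) : bool :=
  [forall s in M, is_edge s] && [forall v, #|[set s in M | v \in s]| == 1%N].

Definition forcing_set (M S : {set {set V}}) : bool :=
  (S \subset M) &&
  [forall M' : {set {set V}}, (perfect_matching M' && (S \subset M')) ==> (M' == M)].

Definition forcing_number_of (M : {set {set V}}) : nat :=
  \big[minn/#|V|.+1]_(S : {set {set V}} | forcing_set M S) #|S|.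

(* f(H): minimum of f(H, M) over all perfect matchings M of H
   (the default #|V|.+1 only matters if H has no perfect matching) *)
Definition forcing_number : nat :=
  \big[minn/#|V|.+1]_(M : {set {set V}} | perfect_matching M) forcing_number_of M.
End Matchings.

Definition cart_rel (A B : finType) (eA : rel A) (eB : rel B) : rel (A * B) :=
  fun p q => ((p.1 == q.1) && eB p.2 q.2) || ((p.2 == q.2) && eA p.1 q.1).

Definition K2_rel : rel bool := fun a b => a != b.

(* Bipartite graph with bipartition (X, Y), X = 'I_m, Y = 'I_n, given by its
   bi-adjacency relation; vertex set 'I_m + 'I_n *)
Definition bip_rel (m n : nat) (adj : 'I_m -> 'I_n -> bool) : rel ('I_m + 'I_n) :=
  fun u v => match u, v with
             | inl x, inr y => adj x y
             | inr y, inl x => adj x y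
             | _, _ => false
             end.

Definition weighted_biadj (F : fieldType) (m n : nat)
  (adj : 'I_m -> 'I_n -> bool) (B : 'M[F]_(m, n)) : Prop :=
  forall (i : 'I_m) (j : 'I_n), (B i j != 0%R) = adj i j.

Definition R_nonempty (F : fieldType) (m n : nat) (adj : 'I_m -> 'I_n -> bool) : Prop :=
  exists (B C : 'M[F]_(m, n)),
    [/\ weighted_biadj adj B, weighted_biadj adj C & B *m C^T = 1%:M]%R.

(* Upper bound: the rungs {(v, 0), (v, 1)} of G □ K2 form a perfect matching,
   forced by the rungs over X: once these are used, a vertex (y, b) with y in Y
   has no neighbour left but (y, ~~ b).
   Lower bound: G □ K2 is bipartite with colour classes of size m + n, and
   [B; I] [C; I]^T = [[I, B], [C^T, I]] is a weighted biadjacency matrix of it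
   of rank at most n.  If S forces M, order its columns along M and replace the
   columns of the edges of S by unit vectors: the identity is then the only
   permutation with nonzero support, so the new matrix is nonsingular, while
   its rank is at most n + |S|.  Hence m + n <= n + |S|. *)

From HB Require Import structures.
From mathcomp Require Import all_boot all_order all_algebra fingroup perm.

Import Order.TTheory GRing.Theory.

Set Implicit Arguments. Unset Strict Implicit. Unset Printing Implicit Defensive.

Section PerfectMatching.
Variables (V : finType) (e : rel V).
Hypotheses (e_sym : symmetric e) (e_irr : irreflexive e).
Implicit Types (M : {set {set V}}) (u v : V).

Lemma perfect_matching_uniq M v s t : perfect_matching e M ->
  s \in M -> t \in M -> v \in s -> v \in t -> s = t.
Proof.
case/andP=> _ /forallP /(_ v) /cards1P [x Ex] sM tM vs vt.
have : s \in [set s in M | v \in s] by rewrite inE sM vs.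
have : t \in [set s in M | v \in s] by rewrite inE tM vt.
by rewrite Ex !inE => /eqP -> /eqP ->.
Qed.

Lemma perfect_matching_edge M s : perfect_matching e M -> s \in M ->
  exists u v, [/\ u != v, e u v & s = [set u; v]].
Proof.
case/andP=> /forallP /(_ s) + _ sM; rewrite sM /=.
by case/existsP=> u /existsP [v /and3P [uv euv /eqP ->]]; exists u, v.
Qed.

Lemma perfect_matching_cover M v : perfect_matching e M -> exists2 s, s \in M & v \in s.
Proof.
case/andP=> _ /forallP /(_ v) /cards1P [s Es].
have : s \in [set s in M | v \in s] by rewrite Es set11.
by rewrite inE => /andP [sM vs]; exists s.
Qed.

Definition mate M v : V := odflt v [pick u | ([set v; u] \in M) && (u != v)].

Section Mate.
Variable M : {set {set V}}.
Hypothesis pmM : perfect_matching e M.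

Lemma mateP v : ([set v; mate M v] \in M) && (mate M v != v).
Proof.
rewrite /mate; case: pickP => [//|no_mate].
have [s sM vs] := perfect_matching_cover v pmM.
have [a [b [ab _ Es]]] := perfect_matching_edge pmM sM; subst s.
case/set2P: vs => Ev; subst v.
- by have := no_mate b; rewrite /= sM eq_sym ab.
- by have := no_mate a; rewrite /= setUC sM ab.
Qed.

Lemma mate_in v : [set v; mate M v] \in M.
Proof. by case/andP: (mateP v). Qed.

Lemma mate_neq v : mate M v != v.
Proof. by case/andP: (mateP v). Qed.

Lemma mate_uniq v s : s \in M -> v \in s -> s = [set v; mate M v].
Proof. by move=> sM vs; apply: perfect_matching_uniq pmM sM (mate_in v) vs (set21 _ _). Qed.

Lemma mate_pair u v : [set u; v] \in M -> u != v -> mate M u = v.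
Proof.
move=> uvM uv; have := set22 u v; rewrite (mate_uniq uvM (set21 _ _)).
by case/set2P => // vu; rewrite vu eqxx in uv.
Qed.

Lemma mate_edge v : e v (mate M v).
Proof.
have [a [b [_ eab Es]]] := perfect_matching_edge pmM (mate_in v).
have := mate_neq v.
have : v \in [set a; b] by rewrite -Es set21.
have : mate M v \in [set a; b] by rewrite -Es set22.
by do 2![case/set2P=> ->]; rewrite ?eqxx // e_sym.
Qed.

Lemma mateK v : mate M (mate M v) = v.
Proof. by apply: mate_pair; rewrite ?mate_neq // setUC mate_in. Qed.

Lemma perfect_matchingE : M = [set [set v; mate M v] | v : V].
Proof.
apply/setP => s; apply/idP/imsetP => [sM|[v _ ->]]; last exact: mate_in.
have [u [v [_ _ Es]]] := perfect_matching_edge pmM sM.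
by exists u; rewrite // (mate_uniq (v := u) sM) // Es set21.
Qed.

End Mate.

Lemma perfect_matching_involution (p : V -> V) :
  (forall v, e v (p v)) -> involutive p -> perfect_matching e [set [set v; p v] | v : V].
Proof.
move=> ep pK; apply/andP; split.
  apply/forallP => s; apply/implyP => /imsetP [v _ ->].
  apply/existsP; exists v; apply/existsP; exists (p v); apply/and3P; split => //.
  by apply/eqP => vp; have := ep v; rewrite -vp e_irr.
apply/forallP => u; apply/cards1P; exists [set u; p u]; apply/setP => s.
rewrite !inE; apply/andP/eqP => [[/imsetP [v _ ->] /set2P [->|->]] //|->].
  by rewrite pK setUC.
by rewrite set21; split; first apply: imset_f.
Qed.

End PerfectMatching.

Section ForcingNumber.
Variables (V : finType) (e : rel V).

Lemma forcing_number_le M S :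
  perfect_matching e M -> forcing_set e M S -> forcing_number e <= #|S|.
Proof.
move=> pmM fS; apply: (@leq_trans (forcing_number_of e M)).
  exact: (@bigmin_le_cond _ nat).
exact: (@bigmin_le_cond _ nat).
Qed.

Lemma forcing_number_ge k : k <= #|V|.+1 ->
  (forall M S, perfect_matching e M -> forcing_set e M S -> k <= #|S|) ->
  k <= forcing_number e.
Proof.
move=> kV kS; apply: (@le_bigmin _ nat) => // M pmM.
by apply: (@le_bigmin _ nat) => // S; apply: kS.
Qed.

End ForcingNumber.

Section UniqueDiagonal.
Local Open Scope ring_scope.
Variables (F : fieldType) (k : nat).
Implicit Types (A W : 'M[F]_k).

Lemma det_unique_diagonal A :
  (forall s : 'S_k, (forall i, A i (s i) != 0) -> s = 1%g) -> \det A = \prod_i A i i.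
Proof.
move=> diag1; rewrite /determinant (bigD1 1%g) //= [X in _ + X]big1 ?addr0 => [|s s1].
  by rewrite odd_perm1 expr0 mul1r; apply: eq_bigr => i _; rewrite perm1.
case: (pickP (fun i => A i (s i) == 0)) => [i /eqP Ai0|nz].
  by rewrite (bigD1 i) //= Ai0 mul0r mulr0.
by move/eqP: s1; rewrite (diag1 s) // => i; rewrite nz.
Qed.

Lemma mxrank_sum_delta (J : {set 'I_k}) :
  (\rank (\sum_(j in J) delta_mx j j : 'M[F]_k)%R <= #|J|)%N.
Proof.
rewrite -sum1_card.
apply: (big_ind2 (fun (A : 'M[F]_k) a => \rank A <= a)%N) => [|A a B b rA rB|j _].
- by rewrite mxrank0.
- exact: leq_trans (mxrank_add A B) (leq_add rA rB).
- by rewrite mxrank_delta.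
Qed.

Lemma leq_rank_unique_diagonal W (p0 : 'S_k) (J : {set 'I_k}) :
  (forall i, W i (p0 i) != 0) ->
  (forall p : 'S_k, (forall i, W i (p i) != 0) -> {in J, p =1 p0} -> p = p0) ->
  (k <= \rank W + #|J|)%N.
Proof.
move=> Wp0 p0_uniq.
pose N : 'M[F]_k := \matrix_(i, j) if j \in J then (i == j)%:R else W i (p0 j).
have N_diag i : N i i != 0 by rewrite mxE; case: ifP; rewrite ?eqxx ?oner_eq0.
have detN : \det N = \prod_i N i i.
  apply: det_unique_diagonal => s Ns.
  have sJ j : j \in J -> s j = j.
    move=> jJ; have := Ns ((s^-1)%g j); rewrite mxE permKV jJ.
    by case: ((s^-1)%g j =P j) => [sj _|_]; [rewrite -{1}sj permKV | rewrite /= eqxx].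
  have sp0 : (s * p0)%g = p0.
    apply: p0_uniq => [i|j jJ]; last by rewrite permM sJ.
    rewrite permM; case sJi: (s i \in J); last by have := Ns i; rewrite mxE sJi.
    by rewrite (perm_inj (sJ _ sJi)).
  by apply/permP => i; rewrite perm1; apply: (@perm_inj _ p0); rewrite -permM sp0.
have rankN : \rank N = k.
  by rewrite mxrank_unit // unitmxE unitfE detN; apply/prodf_neq0 => i _.
rewrite -[X in (X <= _)%N]rankN.
pose Z : 'M[F]_k := \matrix_(l, j) if j \in J then 0 else (l == p0 j)%:R.
have -> : N = W *m Z + \sum_(j in J) delta_mx j j.
  apply/matrixP => i j; rewrite !mxE summxE.
  under [in RHS]eq_bigr do rewrite !mxE.
  under [X in _ = _ + X]eq_bigr do rewrite !mxE.
  case: ifP => jJ.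
    rewrite big1 ?add0r => [|l _]; last exact: mulr0.
    rewrite (bigD1 j) //= eqxx andbT big1 ?addr0 // => l /andP [_ lj].
    by rewrite [j == l]eq_sym (negbTE lj) andbF.
  rewrite [X in _ + X]big1 ?addr0 => [|l lJ].
    by rewrite (bigD1 (p0 j)) //= eqxx mulr1 big1 ?addr0 // => l /negbTE ->; rewrite mulr0.
  by case: (j =P l) => [jl|_]; [rewrite jl lJ in jJ | rewrite andbF].
apply: leq_trans (mxrank_add _ _) (leq_add _ (mxrank_sum_delta J)).
exact: mxrankM_maxl.
Qed.

End UniqueDiagonal.

Section BipartiteForcing.
Variables (V : finType) (e : rel V) (k : nat).
Variables (vert : bool * 'I_k -> V) (unvert : V -> bool * 'I_k).
Hypotheses (vertK : cancel vert unvert) (unvertK : cancel unvert vert).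
Hypothesis e_sym : symmetric e.
Hypothesis e_bip : forall u v, e u v -> (unvert u).1 != (unvert v).1.

Local Notation row i := (vert (false, i)).
Local Notation col j := (vert (true, j)).

Lemma bip_irreflexive : irreflexive e.
Proof. by move=> v; apply/negP => /e_bip; rewrite eqxx. Qed.

Lemma row_neq_col i j : row i != col j.
Proof. by apply/eqP => /(congr1 unvert); rewrite !vertK. Qed.

Section Matching.
Variable M : {set {set V}}.
Hypothesis pmM : perfect_matching e M.

Lemma mate_row i : col (unvert (mate M (row i))).2 = mate M (row i).
Proof.
have := e_bip (mate_edge e_sym pmM (row i)); rewrite vertK /=.
by rewrite -[RHS]unvertK; case: (unvert _) => [[] j].
Qed.

Lemma matching_edge_row s : s \in M -> exists i, s = [set row i; mate M (row i)].
Proof.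
move=> sM; have [u [v [_ euv Es]]] := perfect_matching_edge pmM sM.
wlog uF : u v euv Es / (unvert u).1 = false.
  move=> gen; case uF: (unvert u).1; last exact: (gen u v).
  apply: (gen v u); rewrite 1?e_sym 1?setUC //.
  by have := e_bip euv; rewrite uF; case: (unvert v).1.
exists (unvert u).2; rewrite -uF -surjective_pairing unvertK.
by apply: (mate_uniq pmM sM); rewrite Es set21.
Qed.

Lemma leq_rank_forcing_set (F : fieldType) (W : 'M[F]_k) S :
  (forall i j, (W i j != 0)%R = e (row i) (col j)) -> forcing_set e M S ->
  (k <= \rank W + #|S|)%N.
Proof.
move=> W_e /andP [SM /forallP forcing].
pose c i := (unvert (mate M (row i))).2.
have c_inj : injective c.
  move=> i j /(congr1 (fun j => col j)); rewrite /= !mate_row.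
  by move/(congr1 (mate M)); rewrite !(mateK pmM) => /(can_inj vertK) [].
pose p0 := perm c_inj.
have col_p0 i : col (p0 i) = mate M (row i) by rewrite permE mate_row.
pose J := [set i | [set row i; mate M (row i)] \in S].
have J_S : (#|J| <= #|S|)%N.
  pose f i := [set row i; mate M (row i)].
  have f_inj : injective f.
    move=> i j fij; have : row i \in f j by rewrite -fij set21.
    rewrite /f -col_p0 => /set2P [/(can_inj vertK) [] // | ric].
    by have := row_neq_col i (p0 j); rewrite ric eqxx.
  rewrite -(card_imset J f_inj); apply/subset_leq_card/subsetP => t /imsetP [i].
  by rewrite inE => iJ ->.
suff : (k <= \rank W + #|J|)%N by move/leq_trans; apply; rewrite leq_add2l.
apply: (leq_rank_unique_diagonal (p0 := p0)) => [i|p Wp pJ].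
  by rewrite W_e col_p0 mate_edge.
pose q v := let: (b, i) := unvert v in if b then row ((p^-1)%g i) else col (p i).
have q_row i : q (row i) = col (p i) by rewrite /q vertK.
have q_col j : q (col j) = row ((p^-1)%g j) by rewrite /q vertK.
have q_edge v : e v (q v).
  rewrite -(unvertK v); case: (unvert v) => [[] j]; rewrite ?q_row ?q_col -?W_e //.
  by rewrite e_sym -{2}(permKV p j) -W_e.
have qK : involutive q.
  move=> v; rewrite -(unvertK v); case: (unvert v) => [[] j].
  - by rewrite q_col q_row permKV.
  - by rewrite q_row q_col permK.
have Mq : [set [set v; q v] | v : V] = M.
  apply/eqP; move/implyP: (forcing [set [set v; q v] | v : V]); apply.
  rewrite (perfect_matching_involution bip_irreflexive q_edge qK) /=.
  apply/subsetP => t tS; have [i Et] := matching_edge_row (subsetP SM t tS).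
  have iJ : i \in J by rewrite inE -Et.
  by rewrite Et -col_p0 -pJ // -q_row; apply/imsetP; exists (row i).
apply/permP => i.
have : [set row i; q (row i)] \in M by rewrite -Mq; apply/imsetP; exists (row i).
rewrite q_row => /(mate_pair pmM)/(_ (row_neq_col _ _)).
by rewrite -col_p0 => /(can_inj vertK) [->].
Qed.

End Matching.
End BipartiteForcing.

Section PrismGraph.
Variables (m n : nat) (adj : 'I_m -> 'I_n -> bool).
Local Notation V := (('I_m + 'I_n) * bool)%type.
Local Notation e := (cart_rel (bip_rel adj) K2_rel).

Lemma prism_sym : symmetric e.
Proof.
move=> [u b] [v c]; rewrite /cart_rel /K2_rel /= [c == b]eq_sym [v == u]eq_sym.
by case: b c => [] []; case: u v => [x|y] [x'|y'].
Qed.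

Definition in_Y (u : 'I_m + 'I_n) : bool := if u is inr _ then true else false.

Definition prism_vert (p : bool * 'I_(m + n)) : V :=
  (split p.2, p.1 (+) in_Y (split p.2)).
Definition prism_unvert (v : V) : bool * 'I_(m + n) := (v.2 (+) in_Y v.1, unsplit v.1).

Lemma prism_vertK : cancel prism_vert prism_unvert.
Proof. by move=> [b i]; rewrite /prism_unvert /= addbK splitK. Qed.

Lemma prism_unvertK : cancel prism_unvert prism_vert.
Proof. by move=> [u b]; rewrite /prism_vert /= unsplitK addbK. Qed.

Lemma prism_bip u v : e u v -> (prism_unvert u).1 != (prism_unvert v).1.
Proof.
case: u v => [[x|y] b] [[x'|y'] c]; rewrite /cart_rel /K2_rel /=;
  by case: b c => [] []; rewrite ?andbF ?orbF ?andbT.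
Qed.

Definition rung_swap (v : V) : V := (v.1, ~~ v.2).
Definition rung_matching := [set [set v; rung_swap v] | v : V].
Definition X_rungs := [set [set ((inl x : 'I_m + 'I_n), false); (inl x, true)] | x : 'I_m].

Lemma rung_matching_perfect : perfect_matching e rung_matching.
Proof.
apply: perfect_matching_involution.
- by move=> v; apply/negP => /prism_bip; rewrite eqxx.
- by move=> [u b]; rewrite /cart_rel /rung_swap /K2_rel /= eqxx; case: b.
- by move=> [u b]; rewrite /rung_swap negbK.
Qed.

Lemma card_X_rungs : #|X_rungs| = m.
Proof.
rewrite card_imset ?card_ord // => x y Exy.
have : ((inl x : 'I_m + 'I_n), false) \in [set (inl y, false); (inl y, true)].
  by rewrite -Exy set21.
by case/set2P => [[]|[]].
Qed.

Lemma X_rungs_forcing : forcing_set e rung_matching X_rungs.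
Proof.
apply/andP; split.
  by apply/subsetP => t /imsetP [x _ ->]; apply/imsetP; exists (inl x, false).
apply/forallP => M; apply/implyP => /andP [pmM /subsetP rungsM].
have mate_X x b : mate M ((inl x : 'I_m + 'I_n), b) = (inl x, ~~ b).
  apply: (mate_pair pmM); last by rewrite xpair_eqE eqxx /=; case: b.
  by case: b; [rewrite setUC|]; apply: rungsM; apply/imsetP; exists x.
have mate_swap v : mate M v = rung_swap v.
  case: v => [[x|y] b]; first exact: mate_X.
  have := mate_edge prism_sym pmM (inr y, b).
  case Ew: (mate M (inr y, b)) => [[x|y'] c]; rewrite /cart_rel /K2_rel /=.
    by case/andP => /eqP <- _; have := mateK pmM (inr y, b); rewrite Ew mate_X.
  by rewrite andbF orbF => /andP [/eqP [->]]; case: b c Ew => [] [].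
by apply/eqP; rewrite (perfect_matchingE pmM); apply: eq_imset => v; rewrite mate_swap.
Qed.

End PrismGraph.

Lemma natr_bool_neq0 (R : nzSemiRingType) (b : bool) : (b%:R != 0 :> R)%R = b.
Proof. by case: b; rewrite ?oner_eq0 ?eqxx. Qed.

Section PrismWeights.
Local Open Scope ring_scope.
Variables (F : fieldType) (m n : nat) (adj : 'I_m -> 'I_n -> bool) (B C : 'M[F]_(m, n)).
Hypotheses (B_adj : weighted_biadj adj B) (C_adj : weighted_biadj adj C).
Hypothesis BC : B *m C^T = 1%:M.

Definition prism_weights : 'M[F]_(m + n) := col_mx B 1%:M *m row_mx C^T 1%:M.

Lemma prism_weightsE : prism_weights = block_mx 1%:M B C^T 1%:M.
Proof. by rewrite /prism_weights mul_col_row BC mulmx1 !mul1mx. Qed.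

Lemma prism_weights_pattern i j :
  (prism_weights i j != 0) =
  cart_rel (bip_rel adj) K2_rel (prism_vert (false, i)) (prism_vert (true, j)).
Proof.
rewrite prism_weightsE /prism_vert /cart_rel /K2_rel /=.
case: (split_ordP i) => x ->; case: (split_ordP j) => y ->.
- by rewrite block_mxEul mxE natr_bool_neq0 andbT orbF; apply/eqP/eqP => [->|[]].
- by rewrite block_mxEur /= B_adj.
- by rewrite block_mxEdl mxE /= C_adj.
- by rewrite block_mxEdr mxE natr_bool_neq0 andbT orbF; apply/eqP/eqP => [->|[]].
Qed.

Lemma rank_prism_weights : (\rank prism_weights <= n)%N.
Proof. exact: leq_trans (mxrankM_maxl _ _) (rank_leq_col _). Qed.

End PrismWeights.

Theorem theorem3p1 (F : fieldType) (m n : nat) (adj : 'I_m -> 'I_n -> bool) :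
  (m <= n)%N -> R_nonempty F adj ->
  forcing_number (cart_rel (bip_rel adj) K2_rel) = m.
Proof.
move=> _ [B [C [B_adj C_adj BC]]].
apply/eqP; rewrite eqn_leq; apply/andP; split.
  apply: leq_trans (forcing_number_le (rung_matching_perfect adj) (X_rungs_forcing adj)) _.
  by rewrite card_X_rungs.
apply: forcing_number_ge => [|M S pmM fS].
  by apply: leqW; rewrite card_prod card_sum !card_ord card_bool muln2 -addnn -addnA leq_addr.
have rank_S := leq_rank_forcing_set (@prism_vertK m n) (@prism_unvertK m n)
  (prism_sym adj) (@prism_bip _ _ adj) pmM (prism_weights_pattern B_adj C_adj BC) fS.
rewrite -(leq_add2r n); apply: leq_trans rank_S _.
by rewrite addnC leq_add2l rank_prism_weights.
Qed.
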